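(* $$\sum_{n=0}^{\infty}\Big(\sum_{j=0}^{n}\frac{1}{(2j+1)(2(n-j)+1)}\Big)^2=\frac{\pi^4}{32}.$$ Equivalently, $$1^2+\Big(1\cdot\tfrac13+\tfrac13\cdot 1\Big)^2+\Big(1\cdot\tfrac15+\tfrac13\cdot\tfrac13+\tfrac15\cdot 1\Big)^2+\Big(1\cdot\tfrac17+\tfrac13\cdot\tfrac15+\tfrac15\cdot\tfrac13+\tfrac17\cdot 1\Big)^2+\cdots=\frac{\pi^4}{32}.$$ *)

From Stdlib Require Import Reals.
From Coquelicot Require Import Coquelicot.
Open Scope R_scope.

(* a n = sum_{j=0}^{n} 1/((2j+1)(2(n-j)+1)) ; sum_f_R0 f n has n+1 terms *)
Definition inner_sum (n : nat) : R :=
  sum_f_R0 (fun j => / ((2 * INR j + 1) * (2 * INR (n - j) + 1))) n.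

(* Write u_k = 1/(2k+1), a_v = sum_(j+k=v) u_j u_k, T_n = sum_(v<n) a_v^2 and
   Q_n = sum_(k<n) u_k^2.  The energy E_n = sum u_j u_k u_l u_m over the indices
   j, k, l, m < n with j + k = l + m is squeezed as T_n <= E_n <= T_(2n).  Grouping the
   same quadruples by the lag j - l = m - k instead gives E_n = Q_n^2 + 2 sum_(d>=1) c_d^2
   with c_d = sum_l u_l u_(l+d), and partial fractions telescope c_(d+1) to a_d / 2 up to
   a tail of size at most u_(n-d-1) / 2.  Hence T = lim T_n satisfies T <= 2 Q^2 and
   Q^2 + T/2 <= T, so T = 2 Q^2.  Finally Q = pi^2/8 follows from Leibniz's series:
   squaring its partial sum written symmetrically around n - 1/2 and splitting the
   cross terms by partial fractions leaves 2 Q_n plus an error O(log n / n). *)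

From Stdlib Require Import Reals Lra Lia.
From Coquelicot Require Import Coquelicot.
Open Scope R_scope.

Fixpoint rsum (n : nat) (f : nat -> R) : R :=
  match n with O => 0 | S k => rsum k f + f k end.

Lemma rsum_ext n f g : (forall i, (i < n)%nat -> f i = g i) -> rsum n f = rsum n g.
Proof.
  induction n as [|n IH]; simpl; intros H; auto.
  rewrite IH, H; auto; intros; apply H; lia.
Qed.

Lemma rsum_plus n f g : rsum n (fun i => f i + g i) = rsum n f + rsum n g.
Proof. induction n as [|n IH]; simpl; [ring | rewrite IH; ring]. Qed.

Lemma rsum_minus n f g : rsum n (fun i => f i - g i) = rsum n f - rsum n g.
Proof. induction n as [|n IH]; simpl; [ring | rewrite IH; ring]. Qed.

Lemma rsum_scal_l n c f : rsum n (fun i => c * f i) = c * rsum n f.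
Proof. induction n as [|n IH]; simpl; [ring | rewrite IH; ring]. Qed.

Lemma rsum_opp n f : rsum n (fun i => - f i) = - rsum n f.
Proof. induction n as [|n IH]; simpl; [ring | rewrite IH; ring]. Qed.

Lemma rsum_const n c : rsum n (fun _ => c) = INR n * c.
Proof. induction n as [|n IH]; simpl rsum; [simpl; ring | rewrite IH, S_INR; ring]. Qed.

Lemma rsum_le n f g : (forall i, (i < n)%nat -> f i <= g i) -> rsum n f <= rsum n g.
Proof.
  induction n as [|n IH]; simpl; intros H; [lra |].
  apply Rplus_le_compat; [apply IH |]; auto; intros; apply H; lia.
Qed.

Lemma rsum_nonneg n f : (forall i, (i < n)%nat -> 0 <= f i) -> 0 <= rsum n f.
Proof.
  intros H. replace 0 with (rsum n (fun _ => 0)) by (rewrite rsum_const; ring).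
  now apply rsum_le.
Qed.

Lemma rsum_abs n f : Rabs (rsum n f) <= rsum n (fun i => Rabs (f i)).
Proof.
  induction n as [|n IH]; simpl; [rewrite Rabs_R0; lra |].
  eapply Rle_trans; [apply Rabs_triang | lra].
Qed.

Lemma rsum_add_len n m f : rsum (n + m) f = rsum n f + rsum m (fun i => f (n + i)%nat).
Proof.
  induction m as [|m IH]; simpl; [rewrite Nat.add_0_r; ring |].
  rewrite Nat.add_succ_r; simpl; rewrite IH; ring.
Qed.

Lemma rsum_succ_l n f : rsum (S n) f = f O + rsum n (fun i => f (S i)).
Proof. change (S n) with (1 + n)%nat. rewrite rsum_add_len. simpl. ring. Qed.

Lemma rsum_rev n f : rsum n f = rsum n (fun i => f (n - 1 - i)%nat).
Proof.
  induction n as [|n IH]; auto.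
  rewrite (rsum_succ_l n (fun i => f (S n - 1 - i)%nat)), Rplus_comm.
  change (rsum (S n) f) with (rsum n f + f n).
  replace (S n - 1 - 0)%nat with n by lia. rewrite IH.
  f_equal. apply rsum_ext. intros. f_equal. lia.
Qed.

Lemma rsum_le_len n m f :
  (n <= m)%nat -> (forall i, (n <= i < m)%nat -> 0 <= f i) -> rsum n f <= rsum m f.
Proof.
  intros H Hf. replace m with (n + (m - n))%nat by lia. rewrite rsum_add_len.
  assert (0 <= rsum (m - n) (fun i => f (n + i)%nat)) by (apply rsum_nonneg; intros; apply Hf; lia).
  lra.
Qed.

Lemma rsum_truncate n p f :
  (p <= n)%nat -> (forall i, (p <= i < n)%nat -> f i = 0) -> rsum n f = rsum p f.
Proof.
  intros H Hf. replace n with (p + (n - p))%nat by lia. rewrite rsum_add_len.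
  rewrite (rsum_ext (n - p) _ (fun _ => 0)) by (intros; apply Hf; lia).
  rewrite rsum_const; ring.
Qed.

Lemma rsum_comm n m (f : nat -> nat -> R) :
  rsum n (fun i => rsum m (f i)) = rsum m (fun j => rsum n (fun i => f i j)).
Proof.
  induction n as [|n IH]; simpl; [rewrite rsum_const; ring |].
  rewrite IH, <- rsum_plus. reflexivity.
Qed.

Lemma rsum_mult n m f g : rsum n f * rsum m g = rsum n (fun i => rsum m (fun j => f i * g j)).
Proof.
  rewrite Rmult_comm, <- rsum_scal_l. apply rsum_ext; intros.
  rewrite Rmult_comm, <- rsum_scal_l. reflexivity.
Qed.

Lemma rsum_delta n c F :
  rsum n (fun i => if Nat.eqb c i then F i else 0) = if Nat.ltb c n then F c else 0.
Proof.
  induction n as [|n IH]; simpl; auto. rewrite IH.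
  destruct (Nat.eqb_spec c n), (Nat.ltb_spec c n), (Nat.ltb_spec c (S n));
    subst; try lia; ring.
Qed.

Lemma sum_f_R0_rsum f k : sum_f_R0 f k = rsum (S k) f.
Proof.
  induction k as [|k IH]; [simpl; ring |].
  change (sum_f_R0 f (S k)) with (sum_f_R0 f k + f (S k)). now rewrite IH.
Qed.

Lemma rsum_level_sets n K (k1 k2 : nat -> nat -> nat) (f g : nat -> nat -> R) :
  (forall a b, (a < n)%nat -> (b < n)%nat -> (k1 a b < K)%nat) ->
  rsum n (fun a => rsum n (fun b => rsum n (fun c => rsum n (fun d =>
    if Nat.eqb (k1 a b) (k2 c d) then f a b * g c d else 0))))
  = rsum K (fun v =>
      rsum n (fun a => rsum n (fun b => if Nat.eqb (k1 a b) v then f a b else 0))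
    * rsum n (fun c => rsum n (fun d => if Nat.eqb (k2 c d) v then g c d else 0))).
Proof.
  intros Hk.
  transitivity (rsum K (fun v => rsum n (fun a => rsum n (fun b => rsum n (fun c => rsum n (fun d =>
     (if Nat.eqb (k1 a b) v then f a b else 0) * (if Nat.eqb (k2 c d) v then g c d else 0))))))).
  2:{ apply rsum_ext; intros v _. rewrite rsum_mult. apply rsum_ext; intros a _.
      rewrite rsum_comm. apply rsum_ext; intros b _. now rewrite rsum_mult. }
  symmetry.
  rewrite rsum_comm. apply rsum_ext; intros a Ha.
  rewrite rsum_comm. apply rsum_ext; intros b Hb.
  rewrite rsum_comm. apply rsum_ext; intros c _.
  rewrite rsum_comm. apply rsum_ext; intros d _.
  rewrite (rsum_ext K _ (fun v => if Nat.eqb (k1 a b) v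
                               then f a b * (if Nat.eqb (k2 c d) v then g c d else 0) else 0))
    by (intros v _; destruct (Nat.eqb (k1 a b) v); ring).
  rewrite rsum_delta. specialize (Hk a b Ha Hb).
  destruct (Nat.ltb_spec (k1 a b) K); try lia.
  destruct (Nat.eqb_spec (k1 a b) (k2 c d)), (Nat.eqb_spec (k2 c d) (k1 a b)); try lia; ring.
Qed.

Definition odd_inv (k : nat) : R := / (2 * INR k + 1).

Lemma odd_inv_pos k : 0 < odd_inv k.
Proof. unfold odd_inv. pose proof (pos_INR k). apply Rinv_0_lt_compat. lra. Qed.

Lemma odd_inv_le_inv_succ k : odd_inv k <= / (INR k + 1).
Proof. unfold odd_inv. pose proof (pos_INR k). apply Rinv_le_contravar; lra. Qed.

Lemma odd_inv_le_1 k : odd_inv k <= 1.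
Proof.
  eapply Rle_trans; [apply odd_inv_le_inv_succ |]. pose proof (pos_INR k).
  rewrite <- Rinv_1. apply Rinv_le_contravar; lra.
Qed.

Lemma odd_inv_antimono k l : (k <= l)%nat -> odd_inv l <= odd_inv k.
Proof.
  intros H. unfold odd_inv. apply le_INR in H. pose proof (pos_INR k).
  apply Rinv_le_contravar; lra.
Qed.

Lemma inner_sum_rsum v : inner_sum v = rsum (S v) (fun j => odd_inv j * odd_inv (v - j)).
Proof.
  unfold inner_sum. rewrite sum_f_R0_rsum. apply rsum_ext. intros j _.
  unfold odd_inv. now rewrite Rinv_mult.
Qed.

(* Partial fractions: [1/((2j+1)(2(v-j)+1)) = (1/(2j+1) + 1/(2(v-j)+1)) / (2(v+1))]. *)
Lemma inner_sum_mean v : inner_sum v = rsum (S v) odd_inv / (INR v + 1).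
Proof.
  rewrite inner_sum_rsum.
  rewrite (rsum_ext _ _ (fun j => / (2 * (INR v + 1)) * (odd_inv j + odd_inv (v - j)))).
  2:{ intros j Hj. unfold odd_inv. rewrite minus_INR by lia.
      assert (0 <= INR j) by apply pos_INR. assert (INR j <= INR v) by (apply le_INR; lia).
      field. repeat split; lra. }
  rewrite rsum_scal_l, rsum_plus, (rsum_rev (S v) (fun j => odd_inv (v - j))).
  rewrite (rsum_ext (S v) (fun i => odd_inv (v - (S v - 1 - i))) odd_inv)
    by (intros i Hi; f_equal; lia).
  pose proof (pos_INR v). field. lra.
Qed.

Lemma inner_sum_nonneg v : 0 <= inner_sum v.
Proof.
  rewrite inner_sum_rsum. apply rsum_nonneg. intros i _.
  pose proof (odd_inv_pos i); pose proof (odd_inv_pos (v - i)); nra.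
Qed.

Lemma inner_sum_le_1 v : inner_sum v <= 1.
Proof.
  rewrite inner_sum_mean. pose proof (pos_INR v).
  assert (Hsum : rsum (S v) odd_inv <= INR (S v) * 1)
    by (rewrite <- rsum_const; apply rsum_le; intros; apply odd_inv_le_1).
  rewrite S_INR in Hsum. apply Rmult_le_reg_r with (INR v + 1); [lra |].
  unfold Rdiv. rewrite Rmult_assoc, Rinv_l; lra.
Qed.

Definition sq_partial (n : nat) : R := rsum n (fun v => inner_sum v ^ 2).
Definition odd_sq_partial (n : nat) : R := rsum n (fun k => odd_inv k * odd_inv k).

Definition conv_trunc (n v : nat) : R :=
  rsum n (fun j => rsum n (fun k =>
    if Nat.eqb (j + k) v then odd_inv j * odd_inv k else 0)).

Definition corr (n d : nat) : R :=
  rsum n (fun l => if Nat.ltb (l + d) n then odd_inv (l + d) * odd_inv l else 0).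

(* [corr] indexed by the lag [v - n], so that lags of both signs appear. *)
Definition corr_shifted (n v : nat) : R :=
  rsum n (fun j => rsum n (fun l =>
    if Nat.eqb (j + (n - l)) v then odd_inv j * odd_inv l else 0)).

Definition energy (n : nat) : R :=
  rsum n (fun j => rsum n (fun k => rsum n (fun l => rsum n (fun m =>
    if Nat.eqb (j + k) (l + m)
    then (odd_inv j * odd_inv k) * (odd_inv l * odd_inv m) else 0)))).

Lemma energy_conv n : energy n = rsum (2 * n) (fun v => conv_trunc n v * conv_trunc n v).
Proof. apply rsum_level_sets. intros; lia. Qed.

(* [j + k = l + m] iff [j + (n - l) = m + (n - k)]. *)
Lemma energy_corr_shifted n :
  energy n = rsum (2 * n) (fun v => corr_shifted n v * corr_shifted n v).
Proof.
  unfold corr_shifted.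
  rewrite <- (rsum_level_sets n (2 * n) (fun a b => a + (n - b))%nat (fun a b => a + (n - b))%nat
     (fun a b => odd_inv a * odd_inv b) (fun a b => odd_inv a * odd_inv b)) by (intros; lia).
  unfold energy. apply rsum_ext; intros j _.
  rewrite rsum_comm. apply rsum_ext; intros l Hl.
  rewrite rsum_comm. apply rsum_ext; intros m _.
  apply rsum_ext; intros k Hk.
  destruct (Nat.eqb_spec (j + k) (l + m)), (Nat.eqb_spec (j + (n - l)) (m + (n - k)));
    try lia; ring.
Qed.

Lemma conv_trunc_eq n v : conv_trunc n v =
  rsum n (fun j => if Nat.leb j v then
    (if Nat.ltb (v - j) n then odd_inv j * odd_inv (v - j) else 0) else 0).
Proof.
  unfold conv_trunc. apply rsum_ext; intros j _.
  destruct (Nat.leb_spec j v).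
  - rewrite (rsum_ext n _ (fun k => if Nat.eqb (v - j) k then odd_inv j * odd_inv k else 0)).
    + now rewrite rsum_delta.
    + intros k _. destruct (Nat.eqb_spec (j + k) v), (Nat.eqb_spec (v - j) k); try lia; auto.
  - rewrite (rsum_ext n _ (fun _ => 0)); [rewrite rsum_const; ring |].
    intros k _. destruct (Nat.eqb_spec (j + k) v); try lia; auto.
Qed.

Lemma conv_trunc_nonneg n v : 0 <= conv_trunc n v.
Proof.
  rewrite conv_trunc_eq. apply rsum_nonneg. intros j _.
  destruct (Nat.leb j v); [destruct (Nat.ltb (v - j) n) |]; try lra.
  pose proof (odd_inv_pos j); pose proof (odd_inv_pos (v - j)); nra.
Qed.

Lemma conv_trunc_le n v : conv_trunc n v <= inner_sum v.
Proof.
  rewrite conv_trunc_eq, inner_sum_rsum.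
  assert (Hpos : forall j, 0 <= odd_inv j * odd_inv (v - j))
    by (intros j; pose proof (odd_inv_pos j); pose proof (odd_inv_pos (v - j)); nra).
  destruct (Nat.le_gt_cases n (S v)).
  - apply Rle_trans with (rsum n (fun j => odd_inv j * odd_inv (v - j))).
    + apply rsum_le. intros j Hj. destruct (Nat.leb_spec j v); try lia.
      destruct (Nat.ltb (v - j) n); [lra | apply Hpos].
    + apply rsum_le_len; auto.
  - rewrite (rsum_truncate n (S v))
      by (try lia; intros i Hi; destruct (Nat.leb_spec i v); try lia; auto).
    apply rsum_le. intros j Hj. destruct (Nat.leb_spec j v); try lia.
    destruct (Nat.ltb (v - j) n); [lra | apply Hpos].
Qed.

Lemma conv_trunc_small n v : (v < n)%nat -> conv_trunc n v = inner_sum v.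
Proof.
  intros Hv. rewrite conv_trunc_eq, inner_sum_rsum.
  rewrite (rsum_truncate n (S v))
    by (try lia; intros i Hi; destruct (Nat.leb_spec i v); try lia; auto).
  apply rsum_ext. intros i Hi. destruct (Nat.leb_spec i v); try lia.
  destruct (Nat.ltb_spec (v - i) n); try lia; auto.
Qed.

Lemma sq_partial_le_energy n : sq_partial n <= energy n.
Proof.
  rewrite energy_conv. unfold sq_partial. eapply Rle_trans; [| apply (rsum_le_len n (2 * n))].
  - apply Req_le, rsum_ext. intros. rewrite conv_trunc_small; auto. ring.
  - lia.
  - intros. pose proof (conv_trunc_nonneg n i). nra.
Qed.

Lemma energy_le_sq_partial n : energy n <= sq_partial (2 * n).
Proof.
  rewrite energy_conv. apply rsum_le. intros.
  pose proof (conv_trunc_nonneg n i). pose proof (conv_trunc_le n i). nra.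
Qed.

Lemma corr_shifted_ge n d : corr_shifted n (n + d) = corr n d.
Proof.
  unfold corr_shifted, corr. rewrite rsum_comm. apply rsum_ext; intros l Hl.
  rewrite (rsum_ext n _ (fun j => if Nat.eqb (l + d) j then odd_inv j * odd_inv l else 0)).
  - apply rsum_delta.
  - intros j _. destruct (Nat.eqb_spec (j + (n - l)) (n + d)), (Nat.eqb_spec (l + d) j);
      try lia; auto.
Qed.

Lemma corr_shifted_lt n d : (S d <= n)%nat -> corr_shifted n (n - S d) = corr n (S d).
Proof.
  intros Hd. unfold corr_shifted, corr. apply rsum_ext; intros j Hj.
  rewrite (rsum_ext n _ (fun l => if Nat.eqb (j + S d) l then odd_inv j * odd_inv l else 0)).
  - rewrite rsum_delta. destruct (Nat.ltb (j + S d) n); ring.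
  - intros l Hl. destruct (Nat.eqb_spec (j + (n - l)) (n - S d)), (Nat.eqb_spec (j + S d) l);
      try lia; auto.
Qed.

Lemma corr_0 n : corr n 0 = odd_sq_partial n.
Proof.
  unfold corr, odd_sq_partial. apply rsum_ext. intros l Hl.
  rewrite Nat.add_0_r. destruct (Nat.ltb_spec l n); try lia; auto.
Qed.

Lemma corr_large n d : (n <= d)%nat -> corr n d = 0.
Proof.
  intros H. unfold corr. rewrite (rsum_ext n _ (fun _ => 0)); [rewrite rsum_const; ring |].
  intros l _. destruct (Nat.ltb_spec (l + d) n); try lia; auto.
Qed.

Lemma corr_nonneg n d : 0 <= corr n d.
Proof.
  unfold corr. apply rsum_nonneg. intros i _. destruct (Nat.ltb (i + d) n); try lra.
  pose proof (odd_inv_pos (i + d)); pose proof (odd_inv_pos i); nra.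
Qed.

Lemma energy_corr n :
  energy n = odd_sq_partial n * odd_sq_partial n
             + 2 * rsum n (fun d => corr n (S d) * corr n (S d)).
Proof.
  rewrite energy_corr_shifted. replace (2 * n)%nat with (n + n)%nat by lia.
  rewrite rsum_add_len, rsum_rev.
  rewrite (rsum_ext n _ (fun d => corr n (S d) * corr n (S d))).
  2:{ intros i Hi. replace (n - 1 - i)%nat with (n - S i)%nat by lia.
      rewrite corr_shifted_lt by lia. reflexivity. }
  rewrite (rsum_ext n (fun i => corr_shifted n (n + i) * corr_shifted n (n + i))
    (fun d => corr n d * corr n d)) by (intros; now rewrite corr_shifted_ge).
  destruct n as [|n]; [unfold odd_sq_partial; simpl; ring |].
  assert (Hlast : rsum (S n) (fun d => corr (S n) (S d) * corr (S n) (S d))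
                = rsum n (fun d => corr (S n) (S d) * corr (S n) (S d)))
    by (simpl; rewrite (corr_large (S n) (S n)) by lia; ring).
  rewrite (rsum_succ_l n (fun d => corr (S n) d * corr (S n) d)), corr_0, Hlast. ring.
Qed.

Lemma odd_inv_mult_lag l e : (0 < e)%nat ->
  odd_inv (l + e) * odd_inv l = / (2 * INR e) * (odd_inv l - odd_inv (e + l)).
Proof.
  intros He. apply lt_INR in He. simpl in He. pose proof (pos_INR l).
  unfold odd_inv. rewrite Nat.add_comm, plus_INR. field. repeat split; lra.
Qed.

Lemma rsum_lag_telescope p e f :
  rsum p f - rsum p (fun l => f (e + l)%nat) = rsum e f - rsum e (fun l => f (p + l)%nat).
Proof.
  pose proof (rsum_add_len e p f). pose proof (rsum_add_len p e f).
  rewrite Nat.add_comm in H. lra.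
Qed.

Lemma corr_succ_eq n d : (S d <= n)%nat ->
  corr n (S d) = inner_sum d / 2
               - rsum (S d) (fun i => odd_inv (n - S d + i)) / (2 * INR (S d)).
Proof.
  intros Hd. unfold corr. rewrite (rsum_truncate n (n - S d)); [| lia |].
  2:{ intros i Hi. destruct (Nat.ltb_spec (i + S d) n); try lia; auto. }
  rewrite (rsum_ext (n - S d) _ (fun l => / (2 * INR (S d)) * (odd_inv l - odd_inv (S d + l)))).
  2:{ intros l Hl. destruct (Nat.ltb_spec (l + S d) n); try lia.
      apply odd_inv_mult_lag. lia. }
  rewrite rsum_scal_l, rsum_minus, rsum_lag_telescope, inner_sum_mean, <- S_INR.
  assert (0 < INR (S d)) by (apply lt_0_INR; lia).
  replace (n - S d + 0)%nat with (n - S d)%nat by lia.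
  field. lra.
Qed.

Lemma corr_succ_le n d : corr n (S d) <= inner_sum d / 2.
Proof.
  destruct (Nat.le_gt_cases (S d) n).
  - rewrite corr_succ_eq by auto.
    assert (0 <= rsum (S d) (fun i => odd_inv (n - S d + i)))
      by (apply rsum_nonneg; intros; left; apply odd_inv_pos).
    assert (0 < INR (S d)) by (apply lt_0_INR; lia).
    assert (0 <= rsum (S d) (fun i => odd_inv (n - S d + i)) / (2 * INR (S d)))
      by (apply Rmult_le_pos; try lra; left; apply Rinv_0_lt_compat; lra).
    lra.
  - rewrite corr_large by lia. pose proof (inner_sum_nonneg d). lra.
Qed.

Lemma corr_succ_ge n d : (S d <= n)%nat ->
  inner_sum d / 2 - odd_inv (n - S d) / 2 <= corr n (S d).
Proof.
  intros H. rewrite corr_succ_eq by auto.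
  assert (Htail : rsum (S d) (fun i => odd_inv (n - S d + i)) <= INR (S d) * odd_inv (n - S d)).
  { rewrite <- rsum_const. apply rsum_le. intros. apply odd_inv_antimono. lia. }
  assert (0 < INR (S d)) by (apply lt_0_INR; lia).
  assert (rsum (S d) (fun i => odd_inv (n - S d + i)) / (2 * INR (S d)) <= odd_inv (n - S d) / 2).
  { apply Rmult_le_reg_r with (2 * INR (S d)); [lra |].
    unfold Rdiv. rewrite Rmult_assoc, Rinv_l by lra.
    replace (odd_inv (n - S d) * / 2 * (2 * INR (S d))) with (INR (S d) * odd_inv (n - S d))
      by field. lra. }
  lra.
Qed.

Lemma corr_succ_sq_ge n d : (S d <= n)%nat ->
  (inner_sum d / 2) ^ 2 - odd_inv (n - S d) / 2 <= corr n (S d) * corr n (S d).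
Proof.
  intros H. pose proof (corr_succ_ge n d H). pose proof (corr_nonneg n (S d)).
  pose proof (inner_sum_nonneg d). pose proof (inner_sum_le_1 d). pose proof (odd_inv_pos (n - S d)).
  set (x := inner_sum d / 2) in *. set (c := corr n (S d)) in *. set (y := odd_inv (n - S d) / 2) in *.
  assert (x <= 1/2) by (unfold x; lra). assert (0 <= x) by (unfold x; lra).
  assert (0 <= y) by (unfold y; lra).
  destruct (Rle_dec 0 (x - y)).
  - assert ((x - y) * (x - y) <= c * c) by (apply Rmult_le_compat; lra).
    assert (2 * x * y <= y) by nra. nra.
  - assert (x * x <= x * y) by nra. assert (x * y <= y / 2) by nra. nra.
Qed.

Lemma sq_partial_quarter m : sq_partial m / 4 = rsum m (fun v => (inner_sum v / 2) ^ 2).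
Proof.
  unfold sq_partial, Rdiv. rewrite Rmult_comm, <- rsum_scal_l.
  apply rsum_ext. intros; field.
Qed.

Lemma energy_le n :
  energy n <= odd_sq_partial n * odd_sq_partial n + sq_partial n / 2.
Proof.
  rewrite energy_corr.
  assert (rsum n (fun d => corr n (S d) * corr n (S d)) <= sq_partial n / 4).
  { rewrite sq_partial_quarter. apply rsum_le. intros d _.
    pose proof (corr_succ_le n d). pose proof (corr_nonneg n (S d)). nra. }
  lra.
Qed.

Lemma sq_partial_le n : sq_partial n <= 2 * (odd_sq_partial n * odd_sq_partial n).
Proof. pose proof (sq_partial_le_energy n). pose proof (energy_le n). lra. Qed.

Lemma sq_partial_double_ge n m : (m < n)%nat ->
  odd_sq_partial n * odd_sq_partial n + sq_partial m / 2 - INR m * odd_inv (n - m)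
  <= sq_partial (2 * n).
Proof.
  intros Hm. eapply Rle_trans; [| apply energy_le_sq_partial]. rewrite energy_corr.
  assert (rsum m (fun d => corr n (S d) * corr n (S d))
          <= rsum n (fun d => corr n (S d) * corr n (S d)))
    by (apply rsum_le_len; [lia | intros; pose proof (corr_nonneg n (S i)); nra]).
  assert (sq_partial m / 4 - INR m * odd_inv (n - m) / 2
          <= rsum m (fun d => corr n (S d) * corr n (S d))).
  { replace (sq_partial m / 4 - INR m * odd_inv (n - m) / 2)
      with (rsum m (fun d => (inner_sum d / 2) ^ 2 - odd_inv (n - m) / 2))
      by (rewrite rsum_minus, rsum_const, sq_partial_quarter; field).
    apply rsum_le. intros d Hd. pose proof (corr_succ_sq_ge n d ltac:(lia)).
    pose proof (odd_inv_antimono (n - m) (n - S d) ltac:(lia)). lra. }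
  lra.
Qed.

Lemma pow_m1_sqr a : (-1) ^ a * (-1) ^ a = 1.
Proof. rewrite <- pow_add. replace (a + a)%nat with (2 * a)%nat by lia. apply pow_1_even. Qed.

Lemma pow_m1_S a : (-1) ^ S a = - (-1) ^ a.
Proof. simpl. ring. Qed.

Lemma pow_m1_even_sum a b c : (a + b = 2 * c)%nat -> (-1) ^ a = (-1) ^ b.
Proof.
  intros H. assert (E : (-1) ^ a * (-1) ^ b = 1) by (rewrite <- pow_add, H; apply pow_1_even).
  transitivity ((-1) ^ a * ((-1) ^ b * (-1) ^ b)); [rewrite pow_m1_sqr; ring |].
  rewrite <- Rmult_assoc, E. ring.
Qed.

Lemma INR_pred_sub n k : (k < n)%nat -> INR (n - 1 - k) = INR n - INR k - 1.
Proof.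
  intros H. assert (INR n = INR (n - 1 - k) + INR k + 1)
    by (rewrite <- plus_INR, <- S_INR; f_equal; lia).
  lra.
Qed.

Definition leibniz_partial (n : nat) : R := rsum n (fun k => (-1) ^ k * odd_inv k).

(* Reflecting the Leibniz sum about [n - 1/2]: the [2n] terms [(-1)^i / (2i - 2n + 1)], [i < 2n],
   are, up to the sign [(-1)^n], the Leibniz terms for [k < n], each taken twice. *)
Definition sym_denom (n i : nat) : R := 2 * INR i - 2 * INR n + 1.
Definition sym_term (n i : nat) : R := (-1) ^ i / sym_denom n i.

Lemma sym_denom_neq0 n i : sym_denom n i <> 0.
Proof.
  unfold sym_denom. destruct (Nat.le_gt_cases n i) as [H | H].
  - apply le_INR in H. lra.
  - assert (Hi : INR (S i) <= INR n) by (apply le_INR; lia). rewrite S_INR in Hi. lra.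
Qed.

Lemma sym_term_ge n k : sym_term n (n + k) = (-1) ^ n * ((-1) ^ k * odd_inv k).
Proof.
  unfold sym_term, sym_denom, odd_inv. rewrite plus_INR, pow_add.
  pose proof (pos_INR k). field. lra.
Qed.

Lemma sym_term_lt n k : (k < n)%nat -> sym_term n (n - 1 - k) = (-1) ^ n * ((-1) ^ k * odd_inv k).
Proof.
  intros H. unfold sym_term, sym_denom, odd_inv. rewrite INR_pred_sub by auto.
  rewrite (pow_m1_even_sum (n - 1 - k) (S (n + k)) n) by lia. rewrite pow_m1_S, pow_add.
  pose proof (pos_INR k). field. lra.
Qed.

Lemma rsum_sym_term n : rsum (2 * n) (sym_term n) = 2 * (-1) ^ n * leibniz_partial n.
Proof.
  replace (2 * n)%nat with (n + n)%nat by lia. rewrite rsum_add_len, rsum_rev.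
  rewrite (rsum_ext n _ (fun k => (-1) ^ n * ((-1) ^ k * odd_inv k)))
    by (intros; apply sym_term_lt; auto).
  rewrite (rsum_ext n (fun i => sym_term n (n + i)) (fun k => (-1) ^ n * ((-1) ^ k * odd_inv k)))
    by (intros; apply sym_term_ge).
  rewrite rsum_scal_l. unfold leibniz_partial. ring.
Qed.

Lemma rsum_sym_term_sqr n :
  rsum (2 * n) (fun i => sym_term n i * sym_term n i) = 2 * odd_sq_partial n.
Proof.
  assert (Hsq : forall k, ((-1) ^ n * ((-1) ^ k * odd_inv k)) * ((-1) ^ n * ((-1) ^ k * odd_inv k))
                         = odd_inv k * odd_inv k).
  { intros k. transitivity (((-1) ^ n * (-1) ^ n) * ((-1) ^ k * (-1) ^ k) * (odd_inv k * odd_inv k));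
      [ring | rewrite !pow_m1_sqr; ring]. }
  replace (2 * n)%nat with (n + n)%nat by lia. rewrite rsum_add_len, rsum_rev.
  rewrite (rsum_ext n _ (fun k => odd_inv k * odd_inv k))
    by (intros k Hk; rewrite sym_term_lt by auto; apply Hsq).
  rewrite (rsum_ext n (fun i => sym_term n (n + i) * sym_term n (n + i)) (fun k => odd_inv k * odd_inv k))
    by (intros; rewrite sym_term_ge; apply Hsq).
  unfold odd_sq_partial. ring.
Qed.

Definition alt_dist_sum (n i : nat) : R :=
  rsum (2 * n) (fun k => if Nat.eqb i k then 0 else (-1) ^ (i + k) / (INR k - INR i)).

Definition sym_cross (n i k : nat) : R :=
  if Nat.eqb i k then 0 else (-1) ^ (i + k) / (2 * (INR k - INR i) * sym_denom n i).

(* Partial fractions, using [sym_denom n k - sym_denom n i = 2 (k - i)]. *)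
Lemma sym_term_mult n i k :
  sym_term n i * sym_term n k
  = (if Nat.eqb i k then sym_term n i * sym_term n i else 0) + (sym_cross n i k + sym_cross n k i).
Proof.
  unfold sym_cross. destruct (Nat.eqb_spec i k), (Nat.eqb_spec k i); try lia.
  - subst. ring.
  - unfold sym_term. pose proof (sym_denom_neq0 n i). pose proof (sym_denom_neq0 n k).
    assert (INR k - INR i <> 0) by (intro; apply n0, INR_eq; lra).
    replace (k + i)%nat with (i + k)%nat by lia. rewrite pow_add.
    unfold sym_denom in *. field. repeat split; auto; lra.
Qed.

Lemma rsum_sym_cross n i :
  rsum (2 * n) (sym_cross n i) = alt_dist_sum n i / (2 * sym_denom n i).
Proof.
  unfold alt_dist_sum, sym_cross, Rdiv. rewrite Rmult_comm, <- rsum_scal_l.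
  apply rsum_ext. intros k _. destruct (Nat.eqb_spec i k); [ring |].
  pose proof (sym_denom_neq0 n i).
  assert (INR k - INR i <> 0) by (intro; apply n0, INR_eq; lra).
  field. auto.
Qed.

Lemma leibniz_partial_sqr n :
  4 * (leibniz_partial n * leibniz_partial n)
  = 2 * odd_sq_partial n + rsum (2 * n) (fun i => alt_dist_sum n i / sym_denom n i).
Proof.
  assert (E : rsum (2 * n) (sym_term n) * rsum (2 * n) (sym_term n)
              = 4 * (leibniz_partial n * leibniz_partial n)).
  { rewrite rsum_sym_term.
    transitivity (4 * ((-1) ^ n * (-1) ^ n) * (leibniz_partial n * leibniz_partial n));
      [ring | rewrite pow_m1_sqr; ring]. }
  rewrite <- E, rsum_mult.
  rewrite (rsum_ext (2 * n) _ (fun i => sym_term n i * sym_term n i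
      + rsum (2 * n) (sym_cross n i) + rsum (2 * n) (fun k => sym_cross n k i))).
  2:{ intros i Hi. rewrite (rsum_ext (2 * n) _ (fun k =>
        (if Nat.eqb i k then sym_term n i * sym_term n i else 0) + (sym_cross n i k + sym_cross n k i)))
        by (intros; apply sym_term_mult).
      rewrite !rsum_plus, rsum_delta. destruct (Nat.ltb_spec i (2 * n)); try lia.
      rewrite Rplus_assoc. reflexivity. }
  rewrite !rsum_plus, rsum_sym_term_sqr.
  rewrite (rsum_comm (2 * n) (2 * n) (fun i k => sym_cross n k i)).
  assert (Hcross : rsum (2 * n) (fun i => rsum (2 * n) (sym_cross n i))
                   = / 2 * rsum (2 * n) (fun i => alt_dist_sum n i / sym_denom n i)).
  { rewrite <- rsum_scal_l. apply rsum_ext. intros i _. rewrite rsum_sym_cross.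
    pose proof (sym_denom_neq0 n i). field. auto. }
  change (fun j => rsum (2 * n) (fun i => sym_cross n j i))
    with (fun j => rsum (2 * n) (sym_cross n j)).
  rewrite Hcross. field.
Qed.

Lemma alternating_sum_bounds (U : nat -> R) : (forall k, 0 <= U (S k) <= U k) ->
  forall m p, 0 <= (-1) ^ p * rsum m (fun t => (-1) ^ (p + t) * U (p + t)%nat) <= U p.
Proof.
  intros HU m. induction m as [|m IH]; intros p.
  - simpl. specialize (HU p). lra.
  - rewrite rsum_succ_l, Nat.add_0_r.
    rewrite (rsum_ext m (fun i => (-1) ^ (p + S i) * U (p + S i)%nat)
               (fun t => (-1) ^ (S p + t) * U (S p + t)%nat))
      by (intros; rewrite Nat.add_succ_r; auto).
    specialize (IH (S p)). rewrite pow_m1_S in IH. specialize (HU p).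
    set (Y := rsum m (fun t => (-1) ^ (S p + t) * U (S p + t)%nat)) in *.
    assert (E : (-1) ^ p * ((-1) ^ p * U p + Y) = U p + (-1) ^ p * Y)
      by (rewrite Rmult_plus_distr_l, <- Rmult_assoc, pow_m1_sqr; ring).
    rewrite E. assert (- (-1) ^ p * Y = - ((-1) ^ p * Y)) by ring. lra.
Qed.

Definition alt_harmonic (m : nat) : R := rsum m (fun t => (-1) ^ t / (INR t + 1)).

Lemma alt_harmonic_diff a b : (a <= b)%nat ->
  Rabs (alt_harmonic b - alt_harmonic a) <= / (INR a + 1).
Proof.
  intros H. set (U := fun s : nat => / (INR s + 1)).
  assert (HU : forall k, 0 <= U (S k) <= U k).
  { intros k. unfold U. rewrite S_INR. pose proof (pos_INR k). split.
    - left; apply Rinv_0_lt_compat; lra.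
    - apply Rinv_le_contravar; lra. }
  pose proof (alternating_sum_bounds U HU (b - a) a) as Hb.
  unfold alt_harmonic. replace b with (a + (b - a))%nat by lia. rewrite rsum_add_len.
  set (Y := rsum (b - a) (fun t => (-1) ^ (a + t) * U (a + t)%nat)) in *.
  replace (rsum (b - a) (fun i => (-1) ^ (a + i) / (INR (a + i) + 1))) with Y by reflexivity.
  replace (_ + Y - _) with ((-1) ^ a * ((-1) ^ a * Y)) by (rewrite <- Rmult_assoc, pow_m1_sqr; ring).
  rewrite Rabs_mult, pow_1_abs, Rabs_right by lra. fold (U a). lra.
Qed.

Lemma alt_dist_sum_eq n i : (i < 2 * n)%nat ->
  alt_dist_sum n i = alt_harmonic i - alt_harmonic (2 * n - 1 - i).
Proof.
  intros Hi. unfold alt_dist_sum. set (r := (2 * n - 1 - i)%nat).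
  replace (2 * n)%nat with (i + S r)%nat by (unfold r; lia).
  rewrite rsum_add_len, rsum_succ_l, Nat.add_0_r, Nat.eqb_refl.
  rewrite (rsum_ext r _ (fun t => - ((-1) ^ t / (INR t + 1)))).
  2:{ intros t _. destruct (Nat.eqb_spec i (i + S t)); try lia.
      rewrite (pow_m1_even_sum (i + (i + S t)) (S t) (i + S t)) by lia.
      rewrite plus_INR, S_INR, pow_m1_S. pose proof (pos_INR t). field. lra. }
  rewrite rsum_rev.
  rewrite (rsum_ext i _ (fun t => (-1) ^ t / (INR t + 1))).
  2:{ intros t Ht. destruct (Nat.eqb_spec i (i - 1 - t)); try lia.
      rewrite (pow_m1_even_sum (i + (i - 1 - t)) (S t) i) by lia.
      rewrite INR_pred_sub, pow_m1_S by auto. pose proof (pos_INR t). field. lra. }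
  rewrite rsum_opp. unfold alt_harmonic. ring.
Qed.

Lemma alt_dist_sum_le n k : (k < n)%nat ->
  Rabs (alt_dist_sum n (n - 1 - k)) <= / (INR n - INR k)
  /\ Rabs (alt_dist_sum n (n + k)) <= / (INR n - INR k).
Proof.
  intros Hk. replace (INR n - INR k) with (INR (n - 1 - k) + 1) by (rewrite INR_pred_sub by auto; ring).
  rewrite !alt_dist_sum_eq by lia.
  replace (2 * n - 1 - (n - 1 - k))%nat with (n + k)%nat by lia.
  replace (2 * n - 1 - (n + k))%nat with (n - 1 - k)%nat by lia.
  split; [rewrite Rabs_minus_sym |]; apply alt_harmonic_diff; lia.
Qed.

Definition harmonic (n : nat) : R := rsum n (fun k => / (INR k + 1)).

Lemma harmonic_nonneg n : 0 <= harmonic n.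
Proof.
  apply rsum_nonneg. intros. pose proof (pos_INR i). left. apply Rinv_0_lt_compat. lra.
Qed.

Lemma harmonic_sqr_le n : harmonic n * harmonic n <= 4 * INR n.
Proof.
  induction n as [|n IH]; [unfold harmonic; simpl; lra |].
  assert (Hle : harmonic n <= INR n).
  { rewrite <- (Rmult_1_r (INR n)), <- rsum_const. apply rsum_le. intros.
    pose proof (pos_INR i). rewrite <- Rinv_1. apply Rinv_le_contravar; lra. }
  pose proof (harmonic_nonneg n). pose proof (pos_INR n).
  unfold harmonic in *. simpl rsum. rewrite S_INR.
  set (h := rsum n (fun k => / (INR k + 1))) in *.
  assert (0 < / (INR n + 1) <= 1).
  { split; [apply Rinv_0_lt_compat; lra |]. rewrite <- Rinv_1. apply Rinv_le_contravar; lra. }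
  assert (h * / (INR n + 1) <= 1).
  { apply Rmult_le_reg_r with (INR n + 1); [lra |]. rewrite Rmult_assoc, Rinv_l by lra. lra. }
  nra.
Qed.

(* Partial fractions: [1/((2k+1)(n-k)) = (2/(2k+1) + 1/(n-k)) / (2n+1)]. *)
Lemma rsum_odd_inv_div_le n :
  rsum n (fun k => odd_inv k * / (INR n - INR k)) <= 3 * harmonic n / (2 * INR n + 1).
Proof.
  rewrite (rsum_ext n _ (fun k => / (2 * INR n + 1) * (2 * odd_inv k + / (INR n - INR k)))).
  2:{ intros k Hk. assert (INR k + 1 <= INR n) by (rewrite <- S_INR; apply le_INR; lia).
      pose proof (pos_INR k). unfold odd_inv. field. repeat split; lra. }
  rewrite rsum_scal_l, rsum_plus, rsum_scal_l.
  assert (rsum n odd_inv <= harmonic n) by (apply rsum_le; intros; apply odd_inv_le_inv_succ).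
  assert (Hrev : rsum n (fun k => / (INR n - INR k)) = harmonic n).
  { rewrite rsum_rev. apply rsum_ext. intros k Hk. rewrite INR_pred_sub by auto. f_equal. ring. }
  rewrite Hrev. pose proof (pos_INR n).
  unfold Rdiv. rewrite (Rmult_comm (3 * harmonic n)). apply Rmult_le_compat_l.
  - left; apply Rinv_0_lt_compat; lra.
  - lra.
Qed.

Lemma cross_sum_le n :
  Rabs (rsum (2 * n) (fun i => alt_dist_sum n i / sym_denom n i))
  <= 6 * harmonic n / (2 * INR n + 1).
Proof.
  eapply Rle_trans; [apply rsum_abs |].
  replace (2 * n)%nat with (n + n)%nat by lia. rewrite rsum_add_len, rsum_rev.
  assert (Hterm : forall k, (k < n)%nat ->
            Rabs (alt_dist_sum n (n - 1 - k) / sym_denom n (n - 1 - k)) <= odd_inv k * / (INR n - INR k)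
         /\ Rabs (alt_dist_sum n (n + k) / sym_denom n (n + k)) <= odd_inv k * / (INR n - INR k)).
  { intros k Hk. destruct (alt_dist_sum_le n k Hk) as [Hlo Hhi].
    replace (sym_denom n (n - 1 - k)) with (- / odd_inv k)
      by (unfold sym_denom, odd_inv; rewrite INR_pred_sub, Rinv_inv by auto; ring).
    replace (sym_denom n (n + k)) with (/ odd_inv k)
      by (unfold sym_denom, odd_inv; rewrite plus_INR, Rinv_inv; ring).
    pose proof (odd_inv_pos k).
    unfold Rdiv. rewrite <- Rinv_opp, !Rinv_inv, !Rabs_mult, Rabs_Ropp, (Rabs_right (odd_inv k)) by lra.
    split; rewrite Rmult_comm; apply Rmult_le_compat_l; lra. }
  pose proof (rsum_odd_inv_div_le n).
  assert (rsum n (fun i => Rabs (alt_dist_sum n (n - 1 - i) / sym_denom n (n - 1 - i)))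
          + rsum n (fun i => Rabs (alt_dist_sum n (n + i) / sym_denom n (n + i)))
          <= 2 * rsum n (fun k => odd_inv k * / (INR n - INR k))).
  { replace (2 * _) with (rsum n (fun k => odd_inv k * / (INR n - INR k))
                          + rsum n (fun k => odd_inv k * / (INR n - INR k))) by ring.
    apply Rplus_le_compat; apply rsum_le; intros; apply Hterm; auto. }
  lra.
Qed.

Lemma cross_sum_sqr_le n :
  Rabs (rsum (2 * n) (fun i => alt_dist_sum n i / sym_denom n i))
  * Rabs (rsum (2 * n) (fun i => alt_dist_sum n i / sym_denom n i)) <= 36 * / (INR n + 1).
Proof.
  pose proof (cross_sum_le n).
  pose proof (Rabs_pos (rsum (2 * n) (fun i => alt_dist_sum n i / sym_denom n i))).
  set (r := Rabs _) in *. pose proof (harmonic_sqr_le n). pose proof (harmonic_nonneg n).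
  pose proof (pos_INR n).
  apply Rle_trans with ((6 * harmonic n / (2 * INR n + 1)) * (6 * harmonic n / (2 * INR n + 1)))
    ; [apply Rmult_le_compat; lra |].
  replace ((6 * harmonic n / (2 * INR n + 1)) * (6 * harmonic n / (2 * INR n + 1)))
    with (36 * (harmonic n * harmonic n) / ((2 * INR n + 1) * (2 * INR n + 1))) by (field; lra).
  apply Rle_trans with (36 * (4 * INR n) / ((2 * INR n + 1) * (2 * INR n + 1))).
  { unfold Rdiv. apply Rmult_le_compat_r; [left; apply Rinv_0_lt_compat; nra | lra]. }
  assert (0 < (2 * INR n + 1) * (2 * INR n + 1) * (INR n + 1)) by (repeat apply Rmult_lt_0_compat; lra).
  apply Rmult_le_reg_r with ((2 * INR n + 1) * (2 * INR n + 1) * (INR n + 1)); [lra |].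
  unfold Rdiv. field_simplify; [pose proof (pow2_ge_0 (INR n)); lra | lra | lra].
Qed.

Lemma is_lim_seq_inv_succ : is_lim_seq (fun n => / (INR n + 1)) 0.
Proof.
  assert (H : is_lim_seq (fun n => INR n + 1) p_infty).
  { apply (is_lim_seq_ext (fun n => INR (S n))); [intros; apply S_INR |].
    apply (is_lim_seq_incr_1 INR). apply is_lim_seq_INR. }
  apply (is_lim_seq_inv _ _ H). discriminate.
Qed.

Lemma is_lim_seq_0_of_sqr_le (e w : nat -> R) :
  (forall n, 0 <= e n) -> (forall n, e n * e n <= w n) -> is_lim_seq w 0 -> is_lim_seq e 0.
Proof.
  intros He Hw Hl. apply is_lim_seq_spec. apply is_lim_seq_spec in Hl.
  intros eps. assert (Heps : 0 < eps * eps) by (pose proof (cond_pos eps); nra).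
  destruct (Hl (mkposreal _ Heps)) as [N HN]. exists N. intros n Hn.
  specialize (HN n Hn). simpl in HN. rewrite Rminus_0_r in *.
  rewrite Rabs_right in * by (auto; specialize (He n); lra).
  pose proof (Hw n). pose proof (He n). pose proof (cond_pos eps).
  assert (w n < eps * eps) by (pose proof (Rle_abs (w n)); lra).
  nra.
Qed.

Lemma leibniz_partial_lim : is_lim_seq leibniz_partial (PI / 4).
Proof.
  apply is_lim_seq_incr_1.
  assert (H : Un_cv (fun N => sum_f_R0 (tg_alt PI_tg) N) (PI / 4)).
  { rewrite <- Alt_PI_eq. unfold Alt_PI. destruct exist_PI as [l Hl].
    replace (4 * l / 4) with l by field. auto. }
  apply is_lim_seq_Reals in H. revert H. apply is_lim_seq_ext.
  intros N. rewrite sum_f_R0_rsum. apply rsum_ext. intros k _.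
  unfold tg_alt, PI_tg, odd_inv. rewrite plus_INR, mult_INR. simpl. repeat f_equal.
Qed.

Lemma odd_sq_partial_lim : is_lim_seq odd_sq_partial (PI ^ 2 / 8).
Proof.
  assert (Hgap : is_lim_seq
    (fun n => 4 * (leibniz_partial n * leibniz_partial n) - 2 * odd_sq_partial n) 0).
  { apply is_lim_seq_abs_0.
    apply (is_lim_seq_0_of_sqr_le _ (fun n => 36 * / (INR n + 1))).
    - intros; apply Rabs_pos.
    - intros n. rewrite leibniz_partial_sqr.
      replace (2 * odd_sq_partial n + _ - 2 * odd_sq_partial n) with
        (rsum (2 * n) (fun i => alt_dist_sum n i / sym_denom n i)) by ring.
      apply cross_sum_sqr_le.
    - replace 0 with (36 * 0) by ring. apply (is_lim_seq_scal_l _ 36 0), is_lim_seq_inv_succ. }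
  pose proof (is_lim_seq_mult' _ _ _ _ leibniz_partial_lim leibniz_partial_lim) as HL.
  pose proof (is_lim_seq_minus' _ _ _ _ (is_lim_seq_scal_l _ 4 _ HL) Hgap) as H.
  pose proof (is_lim_seq_scal_l _ (/ 2) _ H) as H2. simpl in H2.
  replace (PI ^ 2 / 8) with (/ 2 * (4 * (PI / 4 * (PI / 4)) - 0)) by field.
  revert H2. apply is_lim_seq_ext. intros n. field.
Qed.

Lemma odd_inv_lim : is_lim_seq odd_inv 0.
Proof.
  apply (is_lim_seq_le_le (fun _ => 0) odd_inv (fun n => / (INR n + 1))).
  - intros; split; [left; apply odd_inv_pos | apply odd_inv_le_inv_succ].
  - apply is_lim_seq_const.
  - apply is_lim_seq_inv_succ.
Qed.

Lemma sq_partial_incr n : sq_partial n <= sq_partial (S n).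
Proof. unfold sq_partial. simpl. pose proof (inner_sum_nonneg n). nra. Qed.

Lemma sq_partial_lim_le (l : R) : is_lim_seq sq_partial l -> l <= 2 * ((PI ^ 2 / 8) * (PI ^ 2 / 8)).
Proof.
  intros Hl.
  assert (Hle : Rbar_le l (2 * ((PI ^ 2 / 8) * (PI ^ 2 / 8)))).
  { apply (is_lim_seq_le sq_partial (fun n => 2 * (odd_sq_partial n * odd_sq_partial n)));
      [apply sq_partial_le | exact Hl |].
    apply (is_lim_seq_scal_l _ 2 (PI ^ 2 / 8 * (PI ^ 2 / 8))), is_lim_seq_mult';
      apply odd_sq_partial_lim. }
  exact Hle.
Qed.

Lemma sq_partial_lim_ge (l : R) :
  is_lim_seq sq_partial l -> (PI ^ 2 / 8) * (PI ^ 2 / 8) + l / 2 <= l.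
Proof.
  intros Hl. set (q := PI ^ 2 / 8).
  assert (Hsq_le : forall n, sq_partial n <= l)
    by (apply is_lim_seq_incr_compare; [exact Hl | apply sq_partial_incr]).
  assert (Hlow : forall m, q * q + sq_partial m / 2 <= l).
  { intros m.
    assert (Rbar_le (q * q + sq_partial m / 2 - INR m * 0) l); [| simpl in *; lra].
    apply (is_lim_seq_le_loc
             (fun n => odd_sq_partial n * odd_sq_partial n + sq_partial m / 2 - INR m * odd_inv (n - m))
             (fun _ => l)).
    - exists (S m). intros n Hn. eapply Rle_trans; [apply sq_partial_double_ge; lia | apply Hsq_le].
    - apply is_lim_seq_minus'; [apply is_lim_seq_plus' |].
      + apply is_lim_seq_mult'; apply odd_sq_partial_lim.
      + apply is_lim_seq_const.
      + apply is_lim_seq_mult'; [apply is_lim_seq_const |].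
        apply (is_lim_seq_incr_n _ m). apply (is_lim_seq_ext odd_inv); [intros; f_equal; lia |].
        apply odd_inv_lim.
    - apply is_lim_seq_const. }
  assert (Hfix : Rbar_le (q * q + l / 2) l).
  { apply (is_lim_seq_le (fun m => q * q + sq_partial m / 2) (fun _ => l));
      [exact Hlow | | apply is_lim_seq_const].
    apply is_lim_seq_plus'; [apply is_lim_seq_const |].
    apply (is_lim_seq_div' _ _ l 2); [exact Hl | apply is_lim_seq_const | discrR]. }
  exact Hfix.
Qed.

Lemma sq_partial_lim : is_lim_seq sq_partial (PI ^ 4 / 32).
Proof.
  assert (Hq_le : forall n, odd_sq_partial n <= PI ^ 2 / 8).
  { apply is_lim_seq_incr_compare; [apply odd_sq_partial_lim |].
    intros n. unfold odd_sq_partial. simpl. pose proof (odd_inv_pos n). nra. }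
  assert (Hbound : forall n, sq_partial n <= 2 * ((PI ^ 2 / 8) * (PI ^ 2 / 8))).
  { intros n. pose proof (sq_partial_le n). pose proof (Hq_le n).
    assert (0 <= odd_sq_partial n) by (apply rsum_nonneg; intros; pose proof (odd_inv_pos i); nra).
    nra. }
  destruct (ex_finite_lim_seq_incr sq_partial _ sq_partial_incr Hbound) as [l Hl].
  pose proof (sq_partial_lim_le l Hl). pose proof (sq_partial_lim_ge l Hl).
  replace (PI ^ 4 / 32) with l by (field_simplify; lra).
  exact Hl.
Qed.

Theorem mainTheorem1 :
  is_series (fun n : nat => (inner_sum n) ^ 2) (PI ^ 4 / 32).
Proof.
  change (is_lim_seq (sum_n (fun n : nat => (inner_sum n) ^ 2)) (PI ^ 4 / 32)).
  apply (is_lim_seq_ext (fun n => sq_partial (S n))).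
  - intros n. rewrite sum_n_Reals, sum_f_R0_rsum. reflexivity.
  - apply (is_lim_seq_incr_1 sq_partial). apply sq_partial_lim.
Qed.
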